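(* Let $A\in\mathbb{R}^{n\times n}$ be symmetric positive definite, $b\in\mathbb{R}^n$, and let the $CD$ method (described in the context) be applied to $Ay=b$ with starting point $y_0\in\mathbb{R}^n$ and real parameters $\gamma_k\neq 0$ for all $k\ge 0$. Let $k\ge 2$ be such that $p_k$ is generated by the method. Then for $0\le i\le k$, $$(Ap_k)^T(Ap_i)=\begin{cases}\|Ap_k\|^2, & i=k,\\[2pt] \dfrac{1}{\gamma_{k-1}}\,p_k^TAp_k, & i=k-1,\\[2pt] 0, & i\le k-2.\end{cases}$$
   Context: The $CD$ method for solving $Ay=b$, with $A$ symmetric positive definite, starting point $y_0\in\mathbb{R}^n$ and nonzero real parameters $\gamma_0,\gamma_1,\dots$, is the following iteration (all norms Euclidean). Set $r_0=b-Ay_0$; if $r_0=0$ stop; set $p_0=r_0$. For $k=0,1,2,\dots$: compute $a_k=\dfrac{r_k^Tp_k}{p_k^TAp_k}$, $y_{k+1}=y_k+a_kp_k$, $r_{k+1}=r_k-a_kAp_k$; if $r_{k+1}=0$ stop; otherwise set $\sigma_k=\gamma_k\dfrac{\|Ap_k\|^2}{p_k^TAp_k}$ and, if $k=0$, $p_1=\gamma_0Ap_0-\sigma_0p_0$, while if $k\ge1$, $\omega_k=\gamma_k\dfrac{(Ap_k)^T(Ap_{k-1})}{p_{k-1}^TAp_{k-1}}$ and $p_{k+1}=\gamma_kAp_k-\sigma_kp_k-\omega_kp_{k-1}$. *)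

From HB Require Import structures.
From mathcomp Require Import all_boot all_order all_algebra.
Set Implicit Arguments. Unset Strict Implicit. Unset Printing Implicit Defensive.
Import Order.TTheory GRing.Theory Num.Theory.
Local Open Scope ring_scope.

Definition dotv {R : realFieldType} {n : nat} (x y : 'cV[R]_n) : R :=
  (x^T *m y) 0 0.
Definition norm2 {R : realFieldType} {n : nat} (x : 'cV[R]_n) : R := dotv x x.

Definition spd {R : realFieldType} {n : nat} (A : 'M[R]_n) : Prop :=
  A^T = A /\ forall x : 'cV[R]_n, x != 0 -> 0 < dotv x (A *m x).

(* State of the CD method after k steps: (y_k, r_k, p_{k-1}, p_k);
   p_{-1} is set to 0 (never used).  Divisions are MathComp's total
   division; as long as the method is actually running the denominators
   are the ones of the paper. *)
Fixpoint cd_state {R : realFieldType} {n : nat} (A : 'M[R]_n) (b y0 : 'cV[R]_n)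
  (gamma : nat -> R) (k : nat) : 'cV[R]_n * 'cV[R]_n * 'cV[R]_n * 'cV[R]_n :=
  match k with
  | 0 => (y0, b - A *m y0, 0, b - A *m y0)
  | k'.+1 =>
      let '(y, r, pp, p) := cd_state A b y0 gamma k' in
      let a := dotv r p / dotv p (A *m p) in
      let y' := y + a *: p in
      let r' := r - a *: (A *m p) in
      let sigma := gamma k' * norm2 (A *m p) / dotv p (A *m p) in
      let p' :=
        if k' == 0%N then gamma 0%N *: (A *m p) - sigma *: p
        else
          let omega := gamma k' * dotv (A *m p) (A *m pp) / dotv pp (A *m pp) in
          gamma k' *: (A *m p) - sigma *: p - omega *: pp in
      (y', r', p, p')
  end.

Definition cd_y {R : realFieldType} {n : nat} (A : 'M[R]_n) b y0 gamma k :=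
  (cd_state A b y0 gamma k).1.1.1.
Definition cd_r {R : realFieldType} {n : nat} (A : 'M[R]_n) b y0 gamma k :=
  (cd_state A b y0 gamma k).1.1.2.
Definition cd_p {R : realFieldType} {n : nat} (A : 'M[R]_n) b y0 gamma k :=
  (cd_state A b y0 gamma k).2.

(* p_k is generated by the method iff it did not stop before, i.e.
   r_0, ..., r_k are all nonzero. *)
Definition cd_generated {R : realFieldType} {n : nat} (A : 'M[R]_n) b y0 gamma k :=
  forall j, (j <= k)%N -> cd_r A b y0 gamma j != 0.

From mathcomp Require Import all_boot all_order all_algebra.
Import Order.TTheory GRing.Theory Num.Theory.
Local Open Scope ring_scope.

(* The directions p_j are A-conjugate: this is proved by strong induction from
   the three-term recurrence, the coefficients sigma_k and omega_k being chosen
   exactly to cancel the components of A p_k along p_k and p_{k-1}, while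
   A p_i (i <= k-2) lies in the span of p_{i+1}, p_i, p_{i-1}.  Reading the
   recurrence backwards, gamma_i A p_i = p_{i+1} + sigma_i p_i + omega_i p_{i-1},
   so (A p_k)^T (A p_i) is 1/gamma_i times the A-product of p_k with
   p_{i+1}, which is p_k^T A p_k for i = k-1 and 0 for i <= k-2. *)

Section InnerProduct.
Context {R : realFieldType} {n : nat}.
Implicit Types (x y z : 'cV[R]_n) (A : 'M[R]_n).

Lemma dotvC x y : dotv x y = dotv y x.
Proof.
have := congr1 (fun M : 'M[R]_1 => M 0 0) (trmx_mul x^T y).
by rewrite /dotv trmxK mxE => ->.
Qed.

Lemma dotvDr x y z : dotv x (y + z) = dotv x y + dotv x z.
Proof. by rewrite /dotv mulmxDr mxE. Qed.

Lemma dotvBr x y z : dotv x (y - z) = dotv x y - dotv x z.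
Proof. by rewrite /dotv mulmxBr !mxE. Qed.

Lemma dotvZr x y a : dotv x (a *: y) = a * dotv x y.
Proof. by rewrite /dotv -scalemxAr mxE. Qed.

Lemma dotv0r x : dotv x 0 = 0.
Proof. by rewrite /dotv mulmx0 mxE. Qed.

Lemma dotv0l x : dotv 0 x = 0.
Proof. by rewrite dotvC dotv0r. Qed.

Lemma dotv_mulmx A x y : dotv x (A *m y) = dotv (A^T *m x) y.
Proof. by rewrite /dotv trmx_mul trmxK mulmxA. Qed.

Lemma dotv_mulmx_sym A x y : A^T = A -> dotv x (A *m y) = dotv y (A *m x).
Proof. by move=> symA; rewrite dotv_mulmx symA dotvC. Qed.

Lemma spd_dotv_eq0 A x : spd A -> dotv x (A *m x) = 0 -> x = 0.
Proof. by case=> _ posA x0; apply/eqP/negPn/negP => /posA; rewrite x0 ltxx. Qed.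

End InnerProduct.

Arguments spd_dotv_eq0 {R n A x}.

Lemma divfK_null (F : fieldType) (x y : F) : (y = 0 -> x = 0) -> x / y * y = x.
Proof.
by have [-> /(_ erefl) ->|y0 _] := eqVneq y 0; [rewrite mulr0 | rewrite mulfVK].
Qed.

Definition cd_pprev {R : realFieldType} {n : nat} (A : 'M[R]_n) b y0 gamma k :=
  (cd_state A b y0 gamma k).1.2.

Section CDMethod.
Variables (R : realFieldType) (n : nat) (A : 'M[R]_n) (b y0 : 'cV[R]_n).
Variable gamma : nat -> R.

Local Notation p := (cd_p A b y0 gamma).
Local Notation pprev := (cd_pprev A b y0 gamma).

Definition cd_sigma j := gamma j * norm2 (A *m p j) / dotv (p j) (A *m p j).

Definition cd_omega j :=
  gamma j * dotv (A *m p j) (A *m pprev j) / dotv (pprev j) (A *m pprev j).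

Lemma cd_pprev0 : pprev 0 = 0.
Proof. by []. Qed.

Lemma cd_pprevS j : pprev j.+1 = p j.
Proof. by rewrite /cd_pprev /cd_p /=; case: (cd_state _ _ _ _ j) => [[[y r] pp] q]. Qed.

Lemma cd_pS j :
  p j.+1 = gamma j *: (A *m p j) - cd_sigma j *: p j - cd_omega j *: pprev j.
Proof.
rewrite /cd_sigma /cd_omega; case: j => [|j]; first by rewrite /cd_pprev /= scaler0 subr0.
set m := j.+1; have /negbTE m_neq0 : m != 0%N by []; clearbody m.
rewrite /cd_p /cd_pprev /=.
by case: (cd_state A b y0 gamma m) => [[[y r] pp] q]; rewrite m_neq0.
Qed.

Lemma cd_p_recurrence j : gamma j != 0 ->
  A *m p j = (gamma j)^-1 *: (p j.+1 + cd_sigma j *: p j + cd_omega j *: pprev j).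
Proof. by move=> g0; rewrite cd_pS addrAC !subrK scalerA mulVf // scale1r. Qed.

Hypothesis spdA : spd A.

Let symA : A^T = A. Proof. by case: spdA. Qed.

Lemma cd_sigma_balance j :
  cd_sigma j * dotv (p j) (A *m p j) = gamma j * norm2 (A *m p j).
Proof.
by rewrite divfK_null // => /(spd_dotv_eq0 spdA) ->; rewrite mulmx0 /norm2 dotv0r mulr0.
Qed.

Lemma cd_omega_balance j :
  cd_omega j * dotv (pprev j) (A *m pprev j) =
    gamma j * dotv (A *m p j) (A *m pprev j).
Proof.
by rewrite divfK_null // => /(spd_dotv_eq0 spdA) ->; rewrite mulmx0 dotv0r mulr0.
Qed.

Hypothesis gamma_neq0 : forall j, gamma j != 0.

Lemma cd_dotv_Ap x j :
  dotv (A *m x) (A *m p j) =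
    (gamma j)^-1 * (dotv (p j.+1) (A *m x) + cd_sigma j * dotv (p j) (A *m x)
                    + cd_omega j * dotv (pprev j) (A *m x)).
Proof.
rewrite [in LHS]cd_p_recurrence // dotvZr !dotvDr !dotvZr.
by rewrite !(dotvC (A *m x)).
Qed.

Lemma cd_pprev_conjugate_of m :
  (forall i, (i < m)%N -> dotv (p i) (A *m p m) = 0) ->
  forall j, (j <= m)%N -> dotv (pprev j) (A *m p m) = 0.
Proof.
move=> conj_m [_|j lt_jm]; first by rewrite cd_pprev0 dotv0l.
by rewrite cd_pprevS conj_m.
Qed.

Lemma cd_conjugate m i : (i < m)%N -> dotv (p i) (A *m p m) = 0.
Proof.
elim/ltn_ind: m i => [[//|m] IH] i; rewrite ltnS => le_im.
have conj_m := IH m (ltnSn m).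
rewrite cd_pS !mulmxBr -!scalemxAr !dotvBr !dotvZr.
rewrite [dotv _ (A *m (A *m _))]dotv_mulmx symA.
have [-> {le_im}|ne_im] := eqVneq i m.
  have pprev_m : dotv (p m) (A *m pprev m) = 0.
    by rewrite dotv_mulmx_sym // (cd_pprev_conjugate_of _ conj_m).
  by rewrite pprev_m mulr0 subr0 cd_sigma_balance subrr.
have lt_im : (i < m)%N by rewrite ltn_neqAle ne_im.
rewrite conj_m // mulr0 subr0.
case: m IH conj_m le_im ne_im lt_im => [//|m] IH conj_m _ _ lt_im.
have [-> {lt_im}|ne_im] := eqVneq i m.
  by rewrite -[p m]cd_pprevS cd_omega_balance dotvC subrr.
have lt_i1m : (i.+1 < m.+1)%N by rewrite ltn_neqAle eqSS ne_im.
rewrite cd_pprevS (IH m (leqW (ltnSn m)) i lt_i1m) mulr0 subr0 dotvC cd_dotv_Ap.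
rewrite (conj_m _ lt_i1m) (conj_m _ lt_im) (cd_pprev_conjugate_of _ conj_m _ (ltnW lt_im)).
by rewrite !(mulr0, addr0).
Qed.

Lemma cd_pprev_conjugate m j : (j <= m)%N -> dotv (pprev j) (A *m p m) = 0.
Proof. exact/cd_pprev_conjugate_of/cd_conjugate. Qed.

End CDMethod.

Arguments cd_conjugate {R n A b y0 gamma} spdA gamma_neq0 {m i}.
Arguments cd_pprev_conjugate {R n A b y0 gamma} spdA gamma_neq0 {m j}.

Theorem lemma2 (R : realFieldType) (n : nat) (A : 'M[R]_n) (b y0 : 'cV[R]_n)
  (gamma : nat -> R) (k : nat) :
  spd A ->
  (forall j, gamma j != 0) ->
  (2 <= k)%N ->
  cd_generated A b y0 gamma k ->
  forall i, (i <= k)%N ->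
    dotv (A *m cd_p A b y0 gamma k) (A *m cd_p A b y0 gamma i) =
      (if i == k then norm2 (A *m cd_p A b y0 gamma k)
       else if i == k.-1 then
         (gamma k.-1)^-1 * dotv (cd_p A b y0 gamma k) (A *m cd_p A b y0 gamma k)
       else 0).
Proof.
move=> spdA gamma_neq0 _ _ i le_ik.
have [-> //|ne_ik] := eqVneq i k.
have lt_ik : (i < k)%N by rewrite ltn_neqAle ne_ik.
rewrite cd_dotv_Ap // (cd_conjugate spdA gamma_neq0 lt_ik).
rewrite (cd_pprev_conjugate spdA gamma_neq0 (ltnW lt_ik)) !mulr0 !addr0.
have [-> //|ne_ik1] := eqVneq i k.-1; first by rewrite prednK // (leq_ltn_trans (leq0n _) lt_ik).
have lt_i1k : (i.+1 < k)%N by rewrite ltn_neqAle lt_ik andbT; apply: contra ne_ik1 => /eqP <-.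
by rewrite (cd_conjugate spdA gamma_neq0 lt_i1k) mulr0.
Qed.
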